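(* Let $n$ be a positive integer and $\alpha\in[0,1]$, and let $G$ be a split graph that arises from the disjoint union of a clique $C$ of order $\alpha n$ and an independent set $I$ of order $(1-\alpha)n$ by adding $m$ edges between vertices in $C$ and vertices in $I$. Then $$Mo(G) \leq ((1+\alpha)n-1)m-\frac{2m^2}{(1-\alpha)n} \leq \begin{cases} \alpha(1-\alpha)n^2\big((1-\alpha)n-1\big) & \text{if } \alpha\leq \frac{1}{3}-\frac{1}{3n},\\[2mm] \frac{1}{8}(1-\alpha)n\big((1+\alpha)n-1\big)^2 & \text{if } \alpha>\frac{1}{3}-\frac{1}{3n}, \end{cases}$$ and moreover $Mo(G)\leq \frac{4}{27}n^3$.
   Context: All graphs are finite and simple. For a graph $G$ and an edge $uv$ of $G$, $n_G(u,v)$ denotes the number of vertices of $G$ whose distance in $G$ to $u$ is strictly smaller than their distance in $G$ to $v$. The Mostar index of $G$ is $Mo(G)=\sum_{uv\in E(G)}|n_G(u,v)-n_G(v,u)|$. Here $\alpha n$ and $(1-\alpha)n$ are the (integer) orders of $C$ and $I$. *)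

From HB Require Import structures.
From mathcomp Require Import all_boot all_order all_algebra.
Set Implicit Arguments. Unset Strict Implicit. Unset Printing Implicit Defensive.
Import Order.TTheory GRing.Theory Num.Theory.

(* A finite simple graph: vertex type V (finType), adjacency e : rel V,
   assumed symmetric and irreflexive in the theorem. *)
Section Graph.
Variables (V : finType) (e : rel V).

Fixpoint ball (k : nat) (u : V) : {set V} :=
  match k with
  | 0 => [set u]
  | k'.+1 => ball k' u :|: [set w | [exists x in ball k' u, e x w]]
  end.

(* graph distance; None = infinity (different components).
   Any finite distance is < #|V|. *)
Definition dist (u w : V) : option nat :=
  if [exists k : 'I_#|V|, w \in ball k u]
  then Some (find (fun k => w \in ball k u) (iota 0 #|V|))
  else None.

Definition dlt (a b : option nat) : bool :=
  match a, b with
  | Some x, Some y => x < y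
  | Some _, None => true
  | None, _ => false
  end.

Definition nG (u v : V) : nat := #|[set w | dlt (dist w u) (dist w v)]|.

(* Mostar index: sum over edges uv (each unordered edge once) *)
Definition mostar : nat :=
  \sum_(u : V) \sum_(v : V | (enum_rank u < enum_rank v) && e u v)
     (maxn (nG u v) (nG v u) - minn (nG u v) (nG v u)).

Definition cross_edges (C : {set V}) : nat :=
  #|[set p : V * V | [&& p.1 \in C, p.2 \notin C & e p.1 p.2]]|.

End Graph.

From HB Require Import structures.
From mathcomp Require Import all_boot all_order all_algebra.
From mathcomp Require Import zify ring lra.
Import Order.TTheory GRing.Theory Num.Theory.
Set Implicit Arguments. Unset Strict Implicit. Unset Printing Implicit Defensive.

(* In a split graph every vertex lies at distance at most 2 from each clique
   vertex, unless it is isolated, so the numbers n_G(u,v) can be read off the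
   neighbourhoods.  For a clique edge uv, n(u,v) - n(v,u) = d(u) - d(v), where
   d counts neighbours in I, and 0 <= d <= |I| gives
   |d(u) - d(v)| <= d(u) + d(v) - 2 d(u) d(v) / |I|.  For an edge ux with x in I,
   the vertices closer to u, those closer to x and the other clique neighbours
   of x are disjoint, so |n(u,x) - n(x,u)| <= n - 1 - deg(x).  Summing over all
   edges and bounding sum_x deg(x)^2 >= m^2 / |I| by Cauchy-Schwarz yields
   Mo <= (n + |C| - 1) m - 2 m^2 / |I|; the other bounds maximise this concave
   quadratic in m over 0 <= m <= |C| |I|, and then over |I|. *)

Lemma sum_sym_pairs (T : finType) (F : T -> T -> nat) :
  (forall u v, F u v = F v u) -> (forall u, F u u = 0) ->
  \sum_u \sum_v F u v = (\sum_u \sum_(v | enum_rank u < enum_rank v) F u v).*2.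
Proof.
move=> F_sym F_diag.
have splitF u v : F u v = (if enum_rank u < enum_rank v then F u v else 0)
                        + (if enum_rank v < enum_rank u then F v u else 0).
  by case: ltngtP => [||/val_inj/enum_rank_inj ->]; rewrite ?addn0 ?F_diag // F_sym.
under eq_bigr => u _ do under eq_bigr => v _ do rewrite splitF.
under eq_bigr => u _ do rewrite big_split.
rewrite -addnn big_split /=; congr (_ + _); last rewrite exchange_big /=;
  by apply: eq_bigr => u _; rewrite -big_mkcond.
Qed.

Section Distance.
Variables (V : finType) (e : rel V).
Hypotheses (e_sym : symmetric e) (e_irr : irreflexive e).

Lemma in_ball1 u w : (w \in ball e 1 u) = (w == u) || e u w.
Proof.
rewrite /= !inE; congr (_ || _); apply/existsP/idP => [[x /andP[]]|euw].
  by rewrite inE => /eqP ->.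
by exists u; rewrite inE eqxx.
Qed.

Lemma ball_isolated k u : (forall y, ~~ e u y) -> ball e k u = [set u].
Proof.
move=> u_iso; elim: k => [//|k IHk]; rewrite [ball e k.+1 u]/= IHk.
apply/setP => w; rewrite !inE; case: eqP => //= _.
by apply/existsP => -[x /andP[]]; rewrite inE => /eqP ->; rewrite (negbTE (u_iso w)).
Qed.

Lemma dist_eq_Some w u j : j < #|V| -> u \in ball e j w ->
  (forall i, i < j -> u \notin ball e i w) -> dist e w u = Some j.
Proof.
move=> lt_j_V u_j u_lt_j; rewrite /dist.
have -> : [exists k : 'I_#|V|, u \in ball e k w].
  by apply/existsP; exists (Ordinal lt_j_V).
congr Some; set p := fun k => u \in ball e k w.
have has_p : has p (iota 0 #|V|) by apply/hasP; exists j; rewrite ?mem_iota.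
have lt_find : find p (iota 0 #|V|) < #|V|.
  by rewrite -[X in _ < X](size_iota 0) -has_find.
have := nth_find 0 has_p; rewrite nth_iota // add0n => p_find.
case: (ltngtP (find p (iota 0 #|V|)) j) => // lt_j_find.
  by case/negP: (u_lt_j _ lt_j_find).
by have := before_find 0 lt_j_find; rewrite nth_iota // add0n /p u_j.
Qed.

Lemma dist_refl w : dist e w w = Some 0.
Proof. by apply: dist_eq_Some; rewrite ?inE //; apply/card_gt0P; exists w. Qed.

Lemma dist_edge w u : e w u -> dist e w u = Some 1.
Proof.
move=> ewu; have neq_wu : w != u by apply: contraTneq ewu => ->; rewrite e_irr.
apply: dist_eq_Some; first by apply/card_gt1P; exists w, u.
  by rewrite in_ball1 ewu orbT.
by case=> // _; rewrite inE eq_sym.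
Qed.

Lemma dist_two w c u : w != u -> ~~ e w u -> e w c -> e c u -> dist e w u = Some 2.
Proof.
move=> neq_wu newu ewc ecu.
have neq_wc : w != c by apply: contraTneq ewc => ->; rewrite e_irr.
have neq_cu : c != u by apply: contraTneq ecu => ->; rewrite e_irr.
apply: dist_eq_Some.
- have : #|[set w; c; u]| <= #|V| by apply: max_card.
  by rewrite -setUA cardsU1 cards2 neq_cu !inE negb_or neq_wc neq_wu.
- rewrite [ball e 2 w]/= !inE; apply/orP; right.
  by apply/existsP; exists c; rewrite ecu in_ball1 ewc orbT.
- by case=> [_|[_|//]]; rewrite ?in_ball1 ?inE eq_sym ?negb_or neq_wu ?newu.
Qed.

Lemma dist_isolated w u : (forall y, ~~ e w y) -> w != u -> dist e w u = None.
Proof.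
move=> w_iso neq_wu; rewrite /dist; case: existsP => // -[k].
by rewrite ball_isolated // inE eq_sym (negbTE neq_wu).
Qed.

Lemma dlt_asym a b : dlt a b -> ~~ dlt b a.
Proof. by case: a b => [a|] [b|] //=; rewrite -leqNgt => /ltnW. Qed.

Definition nG_gap (u v : V) : nat :=
  maxn (nG e u v) (nG e v u) - minn (nG e u v) (nG e v u).

Definition edge_gap (u v : V) : nat := if e u v then nG_gap u v else 0.

Lemma edge_gap_sym u v : edge_gap u v = edge_gap v u.
Proof. by rewrite /edge_gap e_sym /nG_gap maxnC minnC. Qed.

Lemma mostar_double : (mostar e).*2 = \sum_u \sum_v edge_gap u v.
Proof.
rewrite sum_sym_pairs => [|u v|u]; [|exact: edge_gap_sym|by rewrite /edge_gap e_irr].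
by congr double; apply: eq_bigr => u _; rewrite big_mkcondr.
Qed.

End Distance.

Section SplitGraph.
Variables (V : finType) (e : rel V) (C : {set V}).

Definition nbrI (u : V) : {set V} := [set x in ~: C | e u x].
Definition nbrC (x : V) : {set V} := [set u in C | e u x].

Lemma cross_edges_le : cross_edges e C <= #|C| * #|~: C|.
Proof.
rewrite /cross_edges -cardsX; apply/subset_leq_card/subsetP => -[u x].
by rewrite !inE => /and3P[-> -> _].
Qed.

Lemma cross_edgesE :
  cross_edges e C = \sum_u \sum_x [&& u \in C, x \notin C & e u x].
Proof.
rewrite /cross_edges -sum1_card pair_bigA big_mkcond.
by apply: eq_bigr => p _; rewrite inE.
Qed.

Lemma cross_edges_sum_clique : cross_edges e C = \sum_(u in C) #|nbrI u|.
Proof.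
rewrite cross_edgesE [RHS]big_mkcond; apply: eq_bigr => u _.
rewrite -sum1_card; case: (u \in C) => /=; last by rewrite big1.
by rewrite [RHS]big_mkcond; apply: eq_bigr => x _; rewrite !inE.
Qed.

Lemma cross_edges_sum_indep : cross_edges e C = \sum_(x in ~: C) #|nbrC x|.
Proof.
rewrite cross_edgesE exchange_big [RHS]big_mkcond; apply: eq_bigr => x _.
rewrite -sum1_card inE; case: (x \in C) => /=.
  by rewrite big1 // => u; rewrite andbF.
by rewrite [RHS]big_mkcond; apply: eq_bigr => u _; rewrite !inE.
Qed.

Hypotheses (e_sym : symmetric e) (e_irr : irreflexive e).
Hypothesis C_clique : {in C &, forall u v, u != v -> e u v}.
Hypothesis I_indep : {in ~: C &, forall u v, ~~ e u v}.

Lemma nbr_of_indep w c : w \notin C -> e w c -> c \in C.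
Proof.
move=> wI ewc; apply/negPn/negP => cI.
by have := @I_indep w c; rewrite !inE wI cI ewc => /(_ isT isT).
Qed.

Lemma dist_indep_clique w u : w \notin C -> u \in C ->
  dist e w u = if e w u then Some 1 else if [exists c, e w c] then Some 2 else None.
Proof.
move=> wI uC; have neq_wu : w != u by apply: contraNneq wI => ->.
case: ifP => [|newu]; first exact: dist_edge.
case: existsP => [[c ewc]|no_nbr].
  apply: (dist_two e_irr neq_wu (negbT newu) ewc).
  by apply: C_clique; rewrite ?(nbr_of_indep wI ewc) //; apply: contraFneq newu => <-.
by apply: dist_isolated => // y; apply/negP => ewy; apply: no_nbr; exists y.
Qed.

Lemma dlt_dist_indep w u v : w \notin C -> u \in C -> v \in C ->
  dlt (dist e w u) (dist e w v) = e w u && ~~ e w v.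
Proof.
move=> wI uC vC; rewrite !dist_indep_clique //.
by case: (e w u); case: (e w v); case: [exists c, e w c].
Qed.

Lemma nG_clique_edge u v : u \in C -> v \in C -> u != v ->
  nG e u v = #|nbrI u :\: nbrI v|.+1.
Proof.
move=> uC vC neq_uv; rewrite /nG.
suff -> : [set w | dlt (dist e w u) (dist e w v)] = u |: (nbrI u :\: nbrI v).
  by rewrite cardsU1 !inE uC.
apply/setP => w; rewrite !inE.
case: (eqVneq w u) => [->|neq_wu].
  by rewrite dist_refl (dist_edge e_irr (C_clique uC vC neq_uv)).
case: (eqVneq w v) => [->|neq_wv] /=.
  by rewrite dist_refl (dist_edge e_irr (C_clique vC uC _)) 1?eq_sym ?vC.
case: (boolP (w \in C)) => [wC|wI] /=.
  by rewrite !(dist_edge e_irr (C_clique wC _ _)).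
by rewrite dlt_dist_indep // [e w u]e_sym [e w v]e_sym andbC.
Qed.

Lemma nG_cross_edge u x : u \in C -> x \notin C -> e u x ->
  nG_gap e u x + #|nbrC x| < #|V|.
Proof.
move=> uC xI eux; rewrite /nG_gap /nG.
set Su := [set w | dlt (dist e w u) (dist e w x)].
set Sx := [set w | dlt (dist e w x) (dist e w u)].
have uSu : u \in Su by rewrite inE dist_refl (dist_edge e_irr).
have xSx : x \in Sx by rewrite inE dist_refl (dist_edge e_irr) // e_sym.
have SuSx0 : Su :&: Sx = set0.
  by apply/setP => w; rewrite !inE; apply/negbTE/negP => /andP[/dlt_asym/negP].
have SN0 : (Su :|: Sx) :&: (nbrC x :\ u) = set0.
  apply/setP => w; rewrite !inE; apply/negbTE/negP => /and4P[+ neq_wu wC ewx].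
  by rewrite !(dist_edge e_irr (C_clique wC uC neq_wu)) ?(dist_edge e_irr ewx).
have := cardsUI Su Sx; have := cardsUI (Su :|: Sx) (nbrC x :\ u).
have := cardsD1 u (nbrC x).
have := subset_leq_card (subsetT (Su :|: Sx :|: nbrC x :\ u)).
have : 0 < #|Su| by apply/card_gt0P; exists u.
have : 0 < #|Sx| by apply/card_gt0P; exists x.
rewrite cardsT SuSx0 SN0 cards0 !inE uC eux /= !addn0; lia.
Qed.

Lemma mostar_double_split : (mostar e).*2 =
  \sum_(u in C) \sum_(v in C) edge_gap e u v
  + (\sum_(x in ~: C) \sum_(u in C) edge_gap e u x).*2.
Proof.
have sum_split (F : V -> nat) : \sum_v F v = \sum_(v in C) F v + \sum_(v in ~: C) F v.
  by rewrite (bigID [in C]) /=; congr (_ + _); apply: eq_bigl => v; rewrite inE.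
have indep_gap0 u v : u \in ~: C -> v \in ~: C -> edge_gap e u v = 0.
  by move=> uI vI; rewrite /edge_gap (negbTE (I_indep uI vI)).
rewrite mostar_double // sum_split.
under eq_bigr => u _ do rewrite sum_split.
have -> : \sum_(x in ~: C) \sum_v edge_gap e x v
          = \sum_(x in ~: C) \sum_(u in C) edge_gap e u x.
  apply: eq_bigr => x xI; rewrite sum_split.
  have -> : \sum_(v in ~: C) edge_gap e x v = 0 by apply: big1 => v; exact: indep_gap0.
  by rewrite addn0; apply: eq_bigr => u _; rewrite edge_gap_sym.
by rewrite big_split /= -addnA -addnn; congr (_ + (_ + _)); exact: exchange_big.
Qed.

End SplitGraph.

Local Open Scope ring_scope.

Lemma natr_maxn_subn_minn (R : numDomainType) (a b : nat) :
  (maxn a b - minn a b)%N%:R = `|a%:R - b%:R| :> R.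
Proof.
case: (leqP a b) => [le_ab|/ltnW le_ba].
  by rewrite natrB // distrC ger0_norm // subr_ge0 ler_nat.
by rewrite natrB // ger0_norm // subr_ge0 ler_nat.
Qed.

Lemma normB_le_add_sub (R : realFieldType) (a b t : R) :
  0 <= a <= t -> 0 <= b <= t -> `|a - b| <= a + b - 2 / t * (a * b).
Proof.
move=> /andP[a_ge0 a_le_t] /andP[b_ge0 b_le_t].
have [t0|t_neq0] := eqVneq t 0.
  have [-> ->] : a = 0 /\ b = 0 by split; lra.
  by rewrite subr0 normr0 !(mulr0, subr0, addr0).
have t_gt0 : 0 < t by rewrite lt_def t_neq0 (le_trans a_ge0 a_le_t).
set q := a * b / t; have -> : 2 / t * (a * b) = 2 * q by rewrite /q; field.
have q_le_a : q <= a by rewrite ler_pdivrMr // ler_wpM2l.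
have q_le_b : q <= b by rewrite ler_pdivrMr // mulrC ler_wpM2l.
by rewrite ler_norml; apply/andP; split; lra.
Qed.

Lemma sum_pairs_expand (R : comPzRingType) (T : finType) (A : {set T})
    (G F : T -> R) (c : R) :
  \sum_(i in A) \sum_(j in A) (G i + G j - c * (F i * F j))
  = 2 * #|A|%:R * \sum_(i in A) G i - c * (\sum_(i in A) F i) ^+ 2.
Proof.
under eq_bigr => i _ do rewrite sumrB big_split /= sumr_const -mulr_sumr -mulr_sumr.
rewrite sumrB big_split /= sumrMnl sumr_const -mulr_sumr -mulr_suml.
by rewrite -mulr_natr; ring.
Qed.

Lemma sqr_sum_div_card_le (R : realFieldType) (T : finType) (A : {set T}) (F : T -> R) :
  (\sum_(i in A) F i) ^+ 2 / #|A|%:R <= \sum_(i in A) F i ^+ 2.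
Proof.
have [A0|A_gt0] := posnP #|A|.
  by rewrite A0 invr0 mulr0 sumr_ge0 // => i _; apply: sqr_ge0.
have : 0 <= \sum_(i in A) \sum_(j in A) (F i ^+ 2 + F j ^+ 2 - 2 * (F i * F j)).
  apply: sumr_ge0 => i _; apply: sumr_ge0 => j _.
  have -> : F i ^+ 2 + F j ^+ 2 - 2 * (F i * F j) = (F i - F j) ^+ 2 by ring.
  exact: sqr_ge0.
rewrite sum_pairs_expand ler_pdivrMr ?ltr0n //; lra.
Qed.

Section QuadraticBounds.
Variables (R : realFieldType) (A k M t : R).
Hypotheses (t_ge0 : 0 <= t) (M_ge0 : 0 <= M) (M_le : M <= k * t).

Let quadratic_t0 : t = 0 -> A * M - 2 * (M ^+ 2 / t) = 0.
Proof.
move=> t0; have M0 : M = 0 by apply/le_anti; rewrite M_ge0 andbT -(mulr0 k) -t0.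
by rewrite M0 expr0n /= !(mul0r, mulr0) subr0.
Qed.

Lemma quadratic_le_vertex : A * M - 2 * (M ^+ 2 / t) <= t * A ^+ 2 / 8.
Proof.
have [t0|t_neq0] := eqVneq t 0; first by rewrite quadratic_t0 // t0 !mul0r.
set q := M / t; have -> : M = q * t by rewrite /q divfK.
rewrite -subr_ge0.
have -> : t * A ^+ 2 / 8 - (A * (q * t) - 2 * ((q * t) ^+ 2 / t))
          = t * (A - 4 * q) ^+ 2 / 8 by field.
by rewrite divr_ge0 // mulr_ge0 // sqr_ge0.
Qed.

Lemma quadratic_le_endpoint :
  4 * k <= A -> A * M - 2 * (M ^+ 2 / t) <= (A - 2 * k) * k * t.
Proof.
move=> le_4k_A.
have [t0|t_neq0] := eqVneq t 0; first by rewrite quadratic_t0 // t0 mulr0.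
have t_gt0 : 0 < t by rewrite lt_def t_neq0.
set q := M / t; have -> : M = q * t by rewrite /q divfK.
have q_ge0 : 0 <= q by rewrite divr_ge0.
have q_le_k : q <= k by rewrite ler_pdivrMr.
rewrite -subr_ge0.
have -> : (A - 2 * k) * k * t - (A * (q * t) - 2 * ((q * t) ^+ 2 / t))
          = t * (k - q) * (A - 2 * k - 2 * q) by field.
by rewrite !mulr_ge0 // subr_ge0 //; lra.
Qed.

End QuadraticBounds.

Lemma cubic_le_vertex (R : realFieldType) (A n t : R) :
  0 <= t <= n -> 0 <= A <= 2 * n - t -> t * A ^+ 2 / 8 <= 4 / 27 * n ^+ 3.
Proof.
move=> /andP[t_ge0 t_le_n] /andP[A_ge0 A_le].
have : t * A ^+ 2 <= t * (2 * n - t) ^+ 2.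
  by rewrite ler_wpM2l // ler_sqr ?nnegrE //; lra.
have : 0 <= (2 * n - 3 * t) ^+ 2 * (8 * n - 3 * t) by rewrite mulr_ge0 ?sqr_ge0 //; lra.
nra.
Qed.

Section MostarBound.
Variables (R : realFieldType) (V : finType) (e : rel V) (C : {set V}).
Hypotheses (e_sym : symmetric e) (e_irr : irreflexive e).
Hypothesis C_clique : {in C &, forall u v, u != v -> e u v}.
Hypothesis I_indep : {in ~: C &, forall u v, ~~ e u v}.

Let N : R := #|V|%:R.
Let k : R := #|C|%:R.
Let t : R := #|~: C|%:R.
Let M : R := (cross_edges e C)%:R.
Let dI u : R := #|nbrI e C u|%:R.
Let dC x : R := #|nbrC e C x|%:R.

Lemma clique_gap_le u v : u \in C -> v \in C -> (edge_gap e u v)%:R <= `|dI u - dI v|.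
Proof.
move=> uC vC; rewrite /edge_gap; case: ifP => [euv|_]; last exact: normr_ge0.
have neq_uv : u != v by apply: contraTneq euv => ->; rewrite e_irr.
rewrite /dI -natr_maxn_subn_minn ler_nat /nG_gap.
rewrite !(nG_clique_edge e_sym e_irr C_clique I_indep) //; last by rewrite eq_sym.
have := subset_leq_card (subsetIl (nbrI e C u) (nbrI e C v)).
have := subset_leq_card (subsetIr (nbrI e C u) (nbrI e C v)).
rewrite !cardsD [nbrI e C v :&: _]setIC; lia.
Qed.

Lemma dI_le u : dI u <= t.
Proof. by rewrite ler_nat; apply/subset_leq_card/subsetP => x; rewrite inE => /andP[]. Qed.

Lemma sum_clique_gaps :
  (\sum_(u in C) \sum_(v in C) edge_gap e u v)%:R <= 2 * k * M - 2 / t * M ^+ 2.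
Proof.
have <- : \sum_(u in C) dI u = M by rewrite /M cross_edges_sum_clique natr_sum.
rewrite -sum_pairs_expand natr_sum; apply: ler_sum => u uC.
rewrite natr_sum; apply: ler_sum => v vC; apply: le_trans (clique_gap_le uC vC) _.
by apply: normB_le_add_sub; rewrite ler0n dI_le.
Qed.

Lemma cross_gap_le u x : u \in C -> x \notin C -> e u x ->
  (nG_gap e u x)%:R <= N - 1 - dC x.
Proof.
move=> uC xI eux; have := nG_cross_edge e_sym e_irr C_clique uC xI eux.
rewrite -addn1 -(ler_nat R) !natrD -/N -/(dC x); lra.
Qed.

Lemma sum_cross_gaps x : x \notin C ->
  (\sum_(u in C) edge_gap e u x)%:R <= dC x * (N - 1 - dC x).
Proof.
move=> xI; rewrite /edge_gap -big_mkcondr natr_sum.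
rewrite (eq_bigl [in nbrC e C x]) => [|u]; last by rewrite inE.
have -> : dC x * (N - 1 - dC x) = \sum_(u in nbrC e C x) (N - 1 - dC x).
  by rewrite sumr_const -mulr_natl.
apply: ler_sum => u; rewrite inE => /andP[uC eux].
exact: cross_gap_le.
Qed.

Lemma mostar_le : (mostar e)%:R <= (N + k - 1) * M - 2 * (M ^+ 2 / t).
Proof.
have sum_dC : \sum_(x in ~: C) dC x = M by rewrite /M cross_edges_sum_indep natr_sum.
have cross_le :
    (\sum_(x in ~: C) \sum_(u in C) edge_gap e u x)%:R <= (N - 1) * M - M ^+ 2 / t.
  rewrite natr_sum; apply: le_trans (_ : _ <= \sum_(x in ~: C) dC x * (N - 1 - dC x)) _.
    by apply: ler_sum => x; rewrite inE; exact: sum_cross_gaps.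
  have := sqr_sum_div_card_le (~: C) dC; rewrite sum_dC -/t.
  have -> : \sum_(x in ~: C) dC x * (N - 1 - dC x)
            = (N - 1) * M - \sum_(x in ~: C) dC x ^+ 2.
    by rewrite -sum_dC mulr_sumr -sumrB; apply: eq_bigr => x _; ring.
  lra.
have := congr1 (fun n => n%:R : R) (mostar_double_split e_sym e_irr I_indep).
rewrite /= -!mul2n natrD !natrM.
have := sum_clique_gaps; lra.
Qed.

End MostarBound.

Unset Implicit Arguments.

Theorem theorem2 (V : finType) (e : rel V) (C : {set V}) (alpha : rat) :
  symmetric e -> irreflexive e ->
  (0 < #|V|)%N ->
  0 <= alpha <= 1 ->
  (#|C|%:R : rat) = alpha * #|V|%:R ->
  (* C is a clique, I := ~: C is an independent set *)
  {in C &, forall u v, u != v -> e u v} ->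
  {in ~: C &, forall u v, ~~ e u v} ->
  let n : rat := #|V|%:R in
  let m : rat := (cross_edges e C)%:R in
  let Mo : rat := (mostar e)%:R in
  let B : rat := ((1 + alpha) * n - 1) * m - 2 * m ^+ 2 / ((1 - alpha) * n) in
  [/\ Mo <= B,
      alpha <= 1/3 - 1/(3 * n) ->
        B <= alpha * (1 - alpha) * n ^+ 2 * ((1 - alpha) * n - 1),
      1/3 - 1/(3 * n) < alpha ->
        B <= 1/8 * (1 - alpha) * n * ((1 + alpha) * n - 1) ^+ 2
    & Mo <= 4/27 * n ^+ 3].
Proof.
(* The range 0 <= alpha <= 1 is implied by card_C. *)
move=> e_sym e_irr V_gt0 _ card_C C_clique I_indep n m Mo B.
rewrite -/n in card_C; set k := (#|C|%:R : rat) in card_C.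
set t := (#|~: C|%:R : rat).
have n_ge1 : 1 <= n by rewrite ler1n.
have k_ge0 : 0 <= k by rewrite ler0n.
have n_kt : n = k + t by rewrite /n /k /t -natrD cardsC.
have t_eq : (1 - alpha) * n = t by lra.
have B_eq : B = (n + k - 1) * m - 2 * (m ^+ 2 / t).
  by rewrite /B t_eq mulrA; congr (_ * _ - _); lra.
have /andP[m_ge0 m_le] : 0 <= m <= k * t.
  by rewrite ler0n -natrM ler_nat cross_edges_le.
have t_ge0 : 0 <= t by rewrite ler0n.
have Mo_le_B : Mo <= B by rewrite B_eq; exact: mostar_le.
have B_le_vertex : B <= t * (n + k - 1) ^+ 2 / 8.
  by rewrite B_eq; exact: (quadratic_le_vertex _ t_ge0 m_ge0 m_le).
split=> [|alpha_small|_|]; first exact: Mo_le_B.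
- have -> : alpha * (1 - alpha) * n ^+ 2 * ((1 - alpha) * n - 1)
            = (n + k - 1 - 2 * k) * k * t by rewrite -t_eq card_C; ring.
  rewrite B_eq; apply: quadratic_le_endpoint => //.
  have : alpha * n <= (n - 1) / 3.
    move: alpha_small; rewrite -(ler_pM2r (lt_le_trans ltr01 n_ge1)).
    by rewrite (_ : (1/3 - 1/(3 * n)) * n = (n - 1) / 3) //; field; lra.
  lra.
- suff -> : 1/8 * (1 - alpha) * n * ((1 + alpha) * n - 1) ^+ 2
            = t * (n + k - 1) ^+ 2 / 8 by [].
  by rewrite -t_eq card_C; ring.
- apply: le_trans Mo_le_B (le_trans B_le_vertex _).
  by apply: cubic_le_vertex; apply/andP; split; lra.
Qed.
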